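(* Let $k\ge2$, let $I$ be a purified instance relative to $C_k$, and let $I=I_1\cup\dots\cup I_m$, where $I_j$ consists of the tuples of $I$ whose corresponding edges lie in the $j$-th strongly connected component of $F_{C_k}(I)$. Then the frugal repairs of $I$ for $C_k$ are exactly the sets $r_1\cup\dots\cup r_m$ where, for each $j$, $r_j$ is a frugal repair of $I_j$ for $C_k$ (chosen independently).
   Context: $C_k=R_1(\underline{x_1},x_2),\dots,R_k(\underline{x_k},x_1)$, $k\ge2$, first attribute the key, relations of consistent or inconsistent type. A repair is a maximal subset satisfying all key constraints; $C_k^f(r)$ is the set of satisfying valuations $(a_1,\dots,a_k)$; a repair $r$ of $I$ is frugal if no repair $r'$ of $I$ has $C_k^f(r')\subsetneq C_k^f(r)$. $I$ is purified relative to $C_k$ if every tuple occurs in some tuple of $C_k^f(I)$. The instance graph $F_{C_k}(I)$ has the constants as vertices and an edge $(a,b)$ per tuple $R_i(a,b)$; constants in positions of distinct variables are distinct. For purified $I$, every edge of $F_{C_k}(I)$ has both endpoints in one strongly connected component. *)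

From mathcomp Require Import all_boot.
Set Implicit Arguments. Unset Strict Implicit. Unset Printing Implicit Defensive.

(* The query C_k = R_1(x_1,x_2), ..., R_k(x_k,x_1), relations indexed by
   i : 'I_k (R_{i} has key position x_i and second position x_{i+1 mod k}).  A fact R_i(a,b) is the triple
   (i, a, b).  Since constants in positions of distinct variables are
   distinct, a vertex of the instance graph is a pair (i, a) : 'I_k * D
   ("constant a in the position of variable x_i"). *)

Section Cycle.
Variables (k : nat) (D : finType).

Definition fact := ('I_k * D * D)%type.
Definition vertex := ('I_k * D)%type.

Definition rel_of (t : fact) : 'I_k := t.1.1.
Definition src (t : fact) : vertex := (t.1.1, t.1.2).
Definition dst (t : fact) : vertex := (ordS t.1.1, t.2).

Definition key_consistent (r : {set fact}) : Prop :=
  forall i a b b', (i, a, b) \in r -> (i, a, b') \in r -> b = b'.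

Definition rel_consistent (r : {set fact}) (i : 'I_k) : Prop :=
  forall a b b', (i, a, b) \in r -> (i, a, b') \in r -> b = b'.

Definition repair (I r : {set fact}) : Prop :=
  [/\ r \subset I, key_consistent r &
      forall r' : {set fact}, r \proper r' -> r' \subset I -> ~ key_consistent r'].

Definition sat_vals (r : {set fact}) : {set {ffun 'I_k -> D}} :=
  [set v : {ffun 'I_k -> D} | [forall i : 'I_k, (i, v i, v (ordS i)) \in r]].

Definition frugal (I r : {set fact}) : Prop :=
  repair I r /\
  forall r' : {set fact}, repair I r' -> ~ (sat_vals r' \proper sat_vals r).

Definition purified (I : {set fact}) : Prop :=
  forall t, t \in I ->
    exists2 v, v \in sat_vals I & t = (rel_of t, v (rel_of t), v (ordS (rel_of t))).

Definition Fedge (I : {set fact}) : rel vertex :=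
  fun u w => [exists t in I, (src t == u) && (dst t == w)].

Definition Fverts (I : {set fact}) : {set vertex} :=
  [set u | [exists t in I, (src t == u) || (dst t == u)]].

Definition sconn (I : {set fact}) (u w : vertex) : bool :=
  connect (Fedge I) u w && connect (Fedge I) w u.

Definition sccs (I : {set fact}) : {set {set vertex}} :=
  [set [set u in Fverts I | sconn I u w] | w in Fverts I].

Definition part (I : {set fact}) (S : {set vertex}) : {set fact} :=
  [set t in I | (src t \in S) && (dst t \in S)].

End Cycle.

From mathcomp Require Import all_boot.
Set Implicit Arguments. Unset Strict Implicit. Unset Printing Implicit Defensive.

(* 1. Every satisfying valuation (a_1,...,a_k) traces a closed walk
      (1,a_1) -> (2,a_2) -> ... -> (k,a_k) -> (1,a_1) in F_{C_k}(I), so its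
      vertices lie in a single strongly connected component S; in a
      purified instance every edge lies on such a walk, hence inside one
      component.  The parts I_S therefore partition I, two facts with the
      same key lie in the same part, and the valuations of any r <= I are
      the disjoint union of those of the restrictions r /\ I_S.
   2. Consequently r is a repair of I iff each r /\ I_S is a repair of I_S,
      and r is frugal iff each r /\ I_S is frugal: a repair of I_S with
      fewer valuations can be patched into r in place of r /\ I_S, and
      conversely.
   3. The theorem follows, taking r_S := r /\ I_S in one direction and
      noting (\bigcup_S r_S) /\ I_S = r_S in the other. *)

Lemma val_iter_ordS k n (j : 'I_k) : val (iter n (@ordS k) j) = (j + n) %% k.
Proof.
elim: n => [|n IH] /=; first by rewrite addn0 modn_small.
by rewrite IH -[((j + n) %% k).+1]addn1 modnDml -addnA addn1.
Qed.

Lemma connect_cycle k (T : finType) (e : rel T) (f : 'I_k -> T) :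
  (forall j, e (f j) (f (ordS j))) -> forall j j', connect e (f j) (f j').
Proof.
move=> ef j j'.
have reach n : connect e (f j) (f (iter n (@ordS k) j)).
  elim: n => [|n IH]; first exact: connect0.
  exact: connect_trans IH (connect1 (ef _)).
suff -> : j' = iter ((k - j) + j') (@ordS k) j by apply: reach.
apply: val_inj; rewrite val_iter_ordS addnA subnKC ?(ltnW (ltn_ord j)) //.
by rewrite modnDl modn_small.
Qed.

Lemma key_consistent_sub k (D : finType) (r r' : {set fact k D}) :
  r \subset r' -> key_consistent r' -> key_consistent r.
Proof. by move=> /subsetP s kc i a b b' h h'; apply: kc (s _ h) (s _ h'). Qed.

Lemma key_consistent_union k (D : finType) (r1 r2 : {set fact k D}) :
  key_consistent r1 -> key_consistent r2 ->
  (forall i a b b', (i, a, b) \in r1 -> (i, a, b') \in r2 -> (i, a, b) \in r2) ->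
  key_consistent (r1 :|: r2).
Proof.
move=> kc1 kc2 cross i a b b'; rewrite !in_setU.
case/orP=> h; case/orP=> h'.
- exact: kc1 h h'.
- exact: kc2 (cross _ _ _ _ h h') h'.
- exact: kc2 h (cross _ _ _ _ h' h).
- exact: kc2 h h'.
Qed.

Lemma sat_vals_mono k (D : finType) (r1 r2 : {set fact k D}) :
  r1 \subset r2 -> sat_vals r1 \subset sat_vals r2.
Proof.
move=> /subsetP s; apply/subsetP=> v; rewrite !inE => /forallP h.
by apply/forallP=> j; apply: s.
Qed.

Section Components.
Variables (k : nat) (D : finType) (I : {set fact k D}).
Implicit Types (r rS : {set fact k D}) (S : {set vertex k D}).

Lemma sconn_refl u : sconn I u u.
Proof. by rewrite /sconn connect0. Qed.

Lemma sconn_sym u w : sconn I u w = sconn I w u.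
Proof. by rewrite /sconn andbC. Qed.

Lemma sconn_trans u w x : sconn I u w -> sconn I w x -> sconn I u x.
Proof.
move=> /andP[uw wu] /andP[wx xw]; apply/andP.
by split; [apply: connect_trans uw wx | apply: connect_trans xw wu].
Qed.

Definition scc_of (u : vertex k D) : {set vertex k D} :=
  [set x in Fverts I | sconn I x u].

Lemma in_scc_of x u : (x \in scc_of u) = (x \in Fverts I) && sconn I x u.
Proof. by rewrite inE. Qed.

Lemma scc_of_sccs u : u \in Fverts I -> scc_of u \in sccs I.
Proof. by move=> uF; apply/imsetP; exists u. Qed.

Lemma sccs_scc_of S u : S \in sccs I -> u \in S -> S = scc_of u.
Proof.
case/imsetP=> w _ ->; rewrite in_scc_of => /andP[_ uw].
apply/setP=> x; rewrite !in_scc_of; case: (x \in Fverts I) => //=.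
apply/idP/idP => [xw | xu]; last exact: sconn_trans xu uw.
by apply: sconn_trans xw _; rewrite sconn_sym.
Qed.

Lemma Fverts_src t : t \in I -> src t \in Fverts I.
Proof. by move=> tI; rewrite inE; apply/existsP; exists t; rewrite tI eqxx. Qed.

Lemma Fverts_dst t : t \in I -> dst t \in Fverts I.
Proof. by move=> tI; rewrite inE; apply/existsP; exists t; rewrite tI eqxx orbT. Qed.

Lemma in_part S t : (t \in part I S) = [&& t \in I, src t \in S & dst t \in S].
Proof. by rewrite inE andbA. Qed.

Lemma part_sub S : part I S \subset I.
Proof. by apply/subsetP=> t; rewrite in_part => /andP[]. Qed.

Lemma sconn_sat_vals v : v \in sat_vals I -> forall j j', sconn I (j, v j) (j', v j').
Proof.
rewrite inE => /forallP vI j j'.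
have edge x : Fedge I (x, v x) (ordS x, v (ordS x)).
  by apply/existsP; exists (x, v x, v (ordS x)); rewrite vI /= !eqxx.
by rewrite /sconn !(connect_cycle (f := fun x => (x, v x)) edge).
Qed.

Lemma part_scc_of S t : S \in sccs I -> t \in part I S -> S = scc_of (src t).
Proof. by move=> HS; rewrite in_part => /and3P[_ tS _]; apply: sccs_scc_of. Qed.

Lemma part_disj S S' t :
  S \in sccs I -> S' \in sccs I -> t \in part I S -> t \in part I S' -> S = S'.
Proof. by move=> HS HS' tS tS'; rewrite (part_scc_of HS tS) (part_scc_of HS' tS'). Qed.

Lemma bigcup_part_restrict (f : {set vertex k D} -> {set fact k D}) S :
  (forall S', S' \in sccs I -> f S' \subset part I S') -> S \in sccs I ->
  (\bigcup_(S' in sccs I) f S') :&: part I S = f S.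
Proof.
move=> fS HS; apply/setP=> t; rewrite inE; apply/andP/idP => [[]|tf].
  case/bigcupP=> S' HS' tS' tS.
  by rewrite (part_disj HS HS' tS (subsetP (fS S' HS') t tS')).
by split; [apply/bigcupP; exists S | apply: (subsetP (fS S HS))].
Qed.

(* For k > 0 every valuation visits a vertex, hence names a component. *)
Hypothesis k_gt0 : 0 < k.

Lemma sat_vals_part r v j : r \subset I -> v \in sat_vals r ->
  v \in sat_vals (r :&: part I (scc_of (j, v j))).
Proof.
move=> rI vr; have /sat_vals_mono/subsetP/(_ v vr) vI := rI.
move: vr; rewrite !inE => /forallP vr; apply/forallP=> j'.
have tI : (j', v j', v (ordS j')) \in I by rewrite inE in vI; apply: (forallP vI).
rewrite inE vr in_part tI /= !in_scc_of Fverts_src // Fverts_dst //.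
by rewrite !sconn_sat_vals.
Qed.

Lemma sat_vals_parts r v : r \subset I ->
  v \in sat_vals r <-> exists2 S, S \in sccs I & v \in sat_vals (r :&: part I S).
Proof.
move=> rI; split => [vr | [S _]]; last exact/subsetP/sat_vals_mono/subsetIl.
pose j0 := Ordinal k_gt0.
exists (scc_of (j0, v j0)); last exact: sat_vals_part.
move: vr; rewrite inE => /forallP/(_ j0)/(subsetP rI) tI.
exact: scc_of_sccs (Fverts_src tI).
Qed.

Lemma sat_vals_part_uniq r r' S S' v : S \in sccs I -> S' \in sccs I ->
  v \in sat_vals (r :&: part I S) -> v \in sat_vals (r' :&: part I S') -> S = S'.
Proof.
move=> HS HS'; pose j0 := Ordinal k_gt0.
rewrite !inE => /forallP/(_ j0)/setIP[_ tS] /forallP/(_ j0)/setIP[_ tS'].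
exact: part_disj HS HS' tS tS'.
Qed.

Lemma sat_vals_partE r r0 S v : r \subset I -> S \in sccs I ->
  v \in sat_vals r -> v \in sat_vals (r0 :&: part I S) ->
  v \in sat_vals (r :&: part I S).
Proof.
move=> rI HS /(sat_vals_parts _ rI)[S' HS' vS'] vS.
by rewrite (sat_vals_part_uniq HS HS' vS vS').
Qed.

Lemma sat_vals_sub_parts r r' : r \subset I ->
  (forall S, S \in sccs I -> sat_vals (r :&: part I S) \subset sat_vals (r' :&: part I S)) ->
  sat_vals r \subset sat_vals r'.
Proof.
move=> rI sub; apply/subsetP=> v /(sat_vals_parts _ rI)[S HS vS].
exact: subsetP (sat_vals_mono (subsetIl _ _)) v (subsetP (sub S HS) v vS).
Qed.

Hypothesis purI : purified I.

Lemma sconn_edge t : t \in I -> sconn I (src t) (dst t).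
Proof. by move=> tI; have [v vI ->] := purI tI; apply: sconn_sat_vals. Qed.

Lemma part_scc_of_src t : t \in I -> t \in part I (scc_of (src t)).
Proof.
move=> tI; rewrite in_part !in_scc_of tI Fverts_src // Fverts_dst //.
by rewrite sconn_refl sconn_sym sconn_edge.
Qed.

Lemma part_same_key S t t' :
  S \in sccs I -> t \in I -> t' \in part I S -> src t = src t' -> t \in part I S.
Proof. by move=> HS tI t'S e; rewrite (part_scc_of HS t'S) -e part_scc_of_src. Qed.

Lemma bigcup_part r : r \subset I -> r = \bigcup_(S in sccs I) (r :&: part I S).
Proof.
move=> /subsetP rI; apply/setP=> t; apply/idP/idP => [tr|].
  apply/bigcupP; exists (scc_of (src t)); first exact/scc_of_sccs/Fverts_src/rI.
  by rewrite inE tr part_scc_of_src ?rI.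
by case/bigcupP=> S _ /setIP[].
Qed.

Lemma repair_restrict r S : repair I r -> S \in sccs I ->
  repair (part I S) (r :&: part I S).
Proof.
case=> rI kc maxr HS; split; [exact: subsetIr | exact: key_consistent_sub (subsetIl _ _) kc|].
move=> r'' /properP[sub [t tr'' tn]] r''S kc''.
apply: (maxr (r :|: r'')).
- rewrite properE subsetUl; apply/subsetPn; exists t; first by rewrite inE tr'' orbT.
  by apply: contra tn => tr; rewrite inE tr (subsetP r''S).
- by rewrite subUset rI (subset_trans r''S (part_sub S)).
- apply: key_consistent_union => // i a b b' h h'; apply: (subsetP sub).
  by rewrite inE h (part_same_key HS (subsetP rI _ h) (subsetP r''S _ h')).
Qed.

Lemma repair_glue r : r \subset I ->
  (forall S, S \in sccs I -> repair (part I S) (r :&: part I S)) -> repair I r.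
Proof.
move=> rI rep; split => // [i a b b' h h' | r' /properP[sr [t tr' tn]] r'I kc'].
  have hI := subsetP rI _ h; have HS := scc_of_sccs (Fverts_src hI).
  have hS := part_scc_of_src hI.
  have h'S := part_same_key HS (subsetP rI _ h') hS erefl.
  by case: (rep _ HS) => _ kc _; apply: (kc i a b b'); rewrite in_setI ?h ?h' ?hS ?h'S.
have tI := subsetP r'I t tr'; have HS := scc_of_sccs (Fverts_src tI).
case: (rep _ HS) => _ _ maxr; apply: (maxr (r' :&: part I (scc_of (src t)))).
- apply/properP; split; first exact: setSI.
  by exists t; rewrite inE ?tr' ?part_scc_of_src // (negbTE tn).
- exact: subsetIr.
- exact: key_consistent_sub (subsetIl _ _) kc'.
Qed.

Definition patch (r rS : {set fact k D}) (S : {set vertex k D}) : {set fact k D} :=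
  rS :|: (r :\: part I S).

Lemma patch_sub r rS S : r \subset I -> rS \subset part I S -> patch r rS S \subset I.
Proof.
move=> rI rSS; rewrite subUset (subset_trans rSS (part_sub S)).
exact: subset_trans (subsetDl _ _) rI.
Qed.

Lemma patch_part r rS S S' : rS \subset part I S -> S \in sccs I -> S' \in sccs I ->
  patch r rS S :&: part I S' = if S' == S then rS else r :&: part I S'.
Proof.
move=> rSS HS HS'; apply/setP=> t; rewrite /patch !(in_setI, in_setU, in_setD).
have [-> | neq] := eqVneq S' S; rewrite ?in_setI.
  case trS: (t \in rS); first by rewrite (subsetP rSS).
  by case: (t \in part I S); rewrite ?andbF.
case tS': (t \in part I S'); rewrite ?andbF ?andbT //.
have tNS : t \notin part I S.
  by apply: contraNN neq => tS; apply/eqP; apply: part_disj HS' HS tS' tS.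
by rewrite (negbTE tNS) (negbTE (contra (subsetP rSS t) tNS)).
Qed.

(* Restricting a frugal repair of I to a part gives a frugal repair:
   a cheaper repair of I_S would be patched into a cheaper repair of I. *)
Lemma frugal_restrict r S : frugal I r -> S \in sccs I ->
  frugal (part I S) (r :&: part I S).
Proof.
case=> rep fr HS; have rI : r \subset I by case: rep.
split; first exact: repair_restrict.
move=> rS repS /properP[sub [v vrS vn]].
have rSS : rS \subset part I S by case: repS.
have pI := patch_sub rI rSS; have pE := patch_part r rSS HS.
apply: (fr (patch r rS S)).
  apply: repair_glue => // S' HS'; rewrite pE //.
  by case: eqP => [-> | _] //; apply: repair_restrict.
apply/properP; split.
  by apply: sat_vals_sub_parts => // S' HS'; rewrite pE //; case: eqP => [-> | _].
exists v; first exact: subsetP (sat_vals_mono (subsetIl _ _)) v vrS.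
apply: contra vn => vp.
by have := sat_vals_partE pI HS vp vrS; rewrite pE // eqxx.
Qed.

(* Conversely, frugality of all restrictions gives frugality of r: a cheaper
   repair of I is cheaper on some component. *)
Lemma frugal_glue r : r \subset I ->
  (forall S, S \in sccs I -> frugal (part I S) (r :&: part I S)) -> frugal I r.
Proof.
move=> rI fr; split; first by apply: repair_glue => // S /fr[].
move=> r' rep' /properP[sub [v vr vn]].
have r'I : r' \subset I by case: rep'.
have [S HS vS] := (sat_vals_parts _ rI).1 vr.
case: (fr S HS) => _ frS; apply: (frS (r' :&: part I S)).
  exact: repair_restrict.
apply/properP; split; last first.
  by exists v => //; apply: contra vn; apply/subsetP/sat_vals_mono/subsetIl.
apply/subsetP=> w wS.
have wr : w \in sat_vals r.
  exact: subsetP sub w (subsetP (sat_vals_mono (subsetIl r' (part I S))) w wS).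
exact: sat_vals_partE rI HS wr wS.
Qed.

End Components.

Theorem lemma4p4 (k : nat) (D : finType) (cons : 'I_k -> bool)
    (I : {set fact k D}) :
  2 <= k ->
  (forall i, cons i -> rel_consistent I i) ->
  purified I ->
  forall r : {set fact k D},
    frugal I r <->
    exists f : {set vertex k D} -> {set fact k D},
      (forall S, S \in sccs I -> frugal (part I S) (f S)) /\
      r = \bigcup_(S in sccs I) f S.
Proof.
move=> k_ge2 _ purI r; have k_gt0 : 0 < k := ltnW k_ge2.
split => [fr | [f [frf ->]]].
  have rI : r \subset I by case: fr => [[]].
  exists (fun S => r :&: part I S); split; last exact: (bigcup_part purI rI).
  by move=> S; apply: frugal_restrict.
have fS S : S \in sccs I -> f S \subset part I S by case/frf => [[]].
apply: (frugal_glue k_gt0 purI) => [|S HS].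
  by apply/bigcupsP=> S HS; apply: subset_trans (fS S HS) (part_sub I S).
by rewrite (bigcup_part_restrict fS) //; apply: frf.
Qed.
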